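(* Let $\epsilon>0$ and let $G=(S,B,E)$ be a bipartite graph with weights $w:S\to\mathbb{R}_+$ and a fixed arrival order of $B$. For $y\in[0,1]^S$ let $f(y)$ be the total weight $w(M)$ of the matching $M$ produced by $\epsilon$-\textsc{Ranking} on $G$ with samples $x_j=y_j$. Let $x\in[0,1]^S$, $j^\star\in S$ and $\theta\in[0,1]$ be arbitrary, and define $x'$ by $x'_{j^\star}=\theta$ and $x'_j=x_j$ for $j\neq j^\star$. Then \[ |f(x)-f(x')|\le\left(1+\frac{2}{\epsilon}\right)w_{j^\star}. \]
   Context: Buyers $B$ arrive one at a time in the fixed order, each revealing its neighborhood $N(i)\subseteq S$. $\epsilon$-\textsc{Ranking} with samples $x\in[0,1]^S$: when buyer $i$ arrives, match $i$ to an unmatched $j\in N(i)$ maximizing $w_j(1-e^{x_j-1-\epsilon})$ (leave $i$ unmatched if none exists), with ties broken according to a fixed total order on $S$. $w(M)=\sum_{\{i,j\}\in M}w_j$ where $j\in S$. *)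

From HB Require Import structures.
From mathcomp Require Import all_boot all_order all_algebra.
From mathcomp Require Import all_classical all_reals all_analysis.
Set Implicit Arguments. Unset Strict Implicit. Unset Printing Implicit Defensive.
Import Order.TTheory GRing.Theory Num.Theory.
Local Open Scope ring_scope.

Section EpsRanking.
Variables (R : realType) (S B : finType).

Definition score (eps : R) (w x : S -> R) (j : S) : R :=
  w j * (1 - expR (x j - 1 - eps)).

Definition choose_seller (rank : S -> nat) (eps : R) (w x : S -> R)
    (C : {set S}) : option S :=
  [pick j in C | [forall k in C,
      (score eps w x k < score eps w x j) ||
      ((score eps w x k == score eps w x j) && (rank j <= rank k)%N)]].

(* One arrival step: state = (matched sellers, matching built so far). *)
Definition ranking_step (N : B -> {set S}) (rank : S -> nat) (eps : R)
    (w x : S -> R) (st : {set S} * seq (B * S)) (i : B)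
    : {set S} * seq (B * S) :=
  match choose_seller rank eps w x (N i :\: st.1) with
  | Some j => (j |: st.1, (i, j) :: st.2)
  | None => st
  end.

Definition eps_ranking (N : B -> {set S}) (arr : seq B) (rank : S -> nat)
    (eps : R) (w x : S -> R) : seq (B * S) :=
  (foldl (ranking_step N rank eps w x) (finset.set0, [::]) arr).2.

Definition match_weight (w : S -> R) (M : seq (B * S)) : R :=
  \sum_(p <- M) w p.2.

End EpsRanking.

From HB Require Import structures.
From mathcomp Require Import all_boot all_order all_algebra.
From mathcomp Require Import all_classical all_reals all_analysis.
From mathcomp Require Import lra ring.
Import Order.TTheory GRing.Theory Num.Theory.
Local Open Scope ring_scope.

(* Compare both runs with the run of eps-Ranking on the graph from which j* has
   been deleted; that run never looks at the sample of j*, so it is the same for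
   x and x'.  Along the arrivals, the matched set A of a run on the full graph
   and the matched set A' of the run on the reduced graph stay coupled:
   A' = (A + d) - j* for a single seller d with j* in A + d and
   score d <= score j*.  Indeed the sellers available to a buyer in the reduced
   run are exactly those available in the full run except d, so both runs pick
   the same seller unless the full run picks d, which then gets replaced by the
   reduced run's (lower scoring) choice.  As x_d <= 1,
   w_d (1 - e^{-eps}) <= score d <= score j* <= w_j*, hence
   -w_j* / eps <= w(M) - w(M') <= w_j*, and the triangle inequality gives the
   bound, even with 1 + 1/eps. *)

Section EpsRankingStability.
Context {R : realType} {S B : finType} {rank : S -> nat} {eps : R} {w : S -> R}.
Hypotheses (rank_inj : injective rank) (eps_gt0 : 0 < eps) (w_ge0 : forall j, 0 <= w j).
Implicit Types (N : B -> {set S}) (y : S -> R) (A C : {set S}) (i : B) (s : seq B)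
  (st : {set S} * seq (B * S)).

Lemma score_le_weight y j : score eps w y j <= w j.
Proof. by rewrite /score ler_piMr // lerBlDr lerDl. Qed.

Lemma weight_le_score y j : y j <= 1 -> w j * (1 - expR (- eps)) <= score eps w y j.
Proof. by move=> yj_le1; rewrite /score ler_wpM2l // lerB // ler_expR; lra. Qed.

Lemma le_mul1D_subr1_expRN : eps <= (1 + eps) * (1 - expR (- eps)).
Proof.
rewrite expRN; have := expR_ge1Dx eps; have := expR_gt0 eps.
set E := expR eps => E_gt0 le_1De_E.
have EV_gt0 : 0 < E^-1 by rewrite invr_gt0.
have EVE : E^-1 * E = 1 by rewrite mulVf // gt_eqF.
nra.
Qed.

Lemma weight_le_of_score_le y d j : y d <= 1 ->
  score eps w y d <= score eps w y j -> w d <= w j + w j / eps.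
Proof.
move=> yd_le1 le_dj.
have le_d := ler_wpM2l (w_ge0 d) le_mul1D_subr1_expRN.
have le_dj_weight := le_trans (weight_le_score y d yd_le1) (le_trans le_dj (score_le_weight y j)).
have eps1_ge0 : 0 <= 1 + eps by rewrite addr_ge0 // ltW.
have le_scaled := ler_wpM2l eps1_ge0 le_dj_weight.
have le_wd_eps : w d * eps <= (w j + w j / eps) * eps.
  rewrite mulrDl mulfVK ?gt_eqF //; lra.
by rewrite -(ler_pM2r eps_gt0).
Qed.

Section Choice.
Variable y : S -> R.

Definition beats (j k : S) : bool :=
  (score eps w y k < score eps w y j) ||
  ((score eps w y k == score eps w y j) && (rank j <= rank k)%N).

Lemma beats_refl : reflexive beats.
Proof. by move=> j; rewrite /beats eqxx leqnn orbT. Qed.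

Lemma beats_trans : transitive beats.
Proof.
move=> j i k; rewrite /beats => /orP[lt_ij|/andP[/eqP <- le_ij]] /orP[lt_jk|/andP[/eqP -> le_jk]].
- by rewrite (lt_trans lt_jk lt_ij).
- by rewrite lt_ij.
- by rewrite lt_jk.
- by rewrite eqxx (leq_trans le_ij le_jk) orbT.
Qed.

Lemma beats_total : total beats.
Proof.
move=> j k; rewrite /beats.
by case: (ltgtP (score eps w y k) (score eps w y j)) => //= _; rewrite leq_total.
Qed.

Lemma beats_anti j k : beats j k -> beats k j -> j = k.
Proof.
rewrite /beats => /orP[lt_kj|/andP[/eqP e_kj le_jk]] /orP[lt_jk|/andP[/eqP e_jk le_kj]].
- by move: (lt_trans lt_kj lt_jk); rewrite ltxx.
- by move: lt_kj; rewrite e_jk ltxx.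
- by move: lt_jk; rewrite e_kj ltxx.
- by apply: rank_inj; apply/eqP; rewrite eqn_leq le_jk le_kj.
Qed.

Lemma score_le_of_beats j k : beats j k -> score eps w y k <= score eps w y j.
Proof. by rewrite /beats => /orP[/ltW //|/andP[/eqP -> _]]. Qed.

Variant choose_seller_spec (C : {set S}) : option S -> Type :=
  | ChooseSeller j of j \in C & {in C, forall k, beats j k} :
      choose_seller_spec C (Some j)
  | ChooseNoSeller of C = finset.set0 : choose_seller_spec C None.

Lemma choose_sellerP C : choose_seller_spec C (choose_seller rank eps w y C).
Proof.
rewrite /choose_seller; case: pickP => [j /andP[jC /forall_inP j_best]|no_best].
  exact: ChooseSeller.
apply: ChooseNoSeller; apply/setP => j0; rewrite inE; apply/negbTE/negP => j0C.
case: (extremumP id beats_refl beats_trans beats_total j0C) => m mC m_best.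
by move/negP: (no_best m); apply; apply/andP; split => //; apply/forall_inP => k /m_best.
Qed.

Lemma choose_seller_sub C (C' : {set S}) j : C' \subset C -> j \in C' ->
  {in C, forall k, beats j k} -> choose_seller rank eps w y C' = Some j.
Proof.
move=> /fintype.subsetP sub_C'C jC' j_best.
case: choose_sellerP => [k kC' k_best|C'0]; last by move: jC'; rewrite C'0 inE.
by congr Some; apply: beats_anti; [apply: k_best | apply/j_best/sub_C'C].
Qed.

End Choice.

Lemma eq_choose_seller C (y1 y2 : S -> R) : {in C, y1 =1 y2} ->
  choose_seller rank eps w y1 C = choose_seller rank eps w y2 C.
Proof.
move=> eq_y; apply: eq_pick => j /=; apply: andb_id2l => jC.
by apply: eq_forallb_in => k kC; rewrite /score (eq_y j jC) (eq_y k kC).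
Qed.

Lemma eq_eps_ranking N s (y1 y2 : S -> R) : (forall i, {in N i, y1 =1 y2}) ->
  eps_ranking N s rank eps w y1 = eps_ranking N s rank eps w y2.
Proof.
move=> eq_y; rewrite /eps_ranking; congr (_.2).
elim: s (finset.set0, [::]) => //= i s IH st; rewrite IH /ranking_step.
by rewrite (@eq_choose_seller _ y1 y2) // => j /setDP[/eq_y].
Qed.

Definition extend_matched (N : B -> {set S}) (y : S -> R) (A : {set S}) (i : B)
    : {set S} :=
  if choose_seller rank eps w y (N i :\: A) is Some j then j |: A else A.

Definition matched (N : B -> {set S}) (y : S -> R) (s : seq B) : {set S} :=
  foldl (extend_matched N y) finset.set0 s.

Lemma ranking_step_fst N y st i :
  (ranking_step N rank eps w y st i).1 = extend_matched N y st.1 i.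
Proof. by rewrite /ranking_step /extend_matched; case: choose_seller. Qed.

Lemma ranking_step_weight N y st i :
  match_weight w st.2 = \sum_(j in st.1) w j ->
  match_weight w (ranking_step N rank eps w y st i).2 =
    \sum_(j in (ranking_step N rank eps w y st i).1) w j.
Proof.
rewrite /ranking_step /match_weight; case: choose_sellerP => [j jC _|_] //= W_st.
have jA : j \notin st.1 by move: jC; rewrite inE => /andP[].
by rewrite big_cons big_setU1 //= W_st.
Qed.

Lemma foldl_ranking_step_weight N y s st :
  match_weight w st.2 = \sum_(j in st.1) w j ->
  match_weight w (foldl (ranking_step N rank eps w y) st s).2 =
    \sum_(j in foldl (extend_matched N y) st.1 s) w j.
Proof.
elim: s st => //= i s IH st W_st.
by rewrite -ranking_step_fst; apply/IH/ranking_step_weight.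
Qed.

Lemma eps_ranking_weight N y s :
  match_weight w (eps_ranking N s rank eps w y) = \sum_(j in matched N y s) w j.
Proof.
apply: (@foldl_ranking_step_weight N y s (finset.set0, [::])).
by rewrite /match_weight big_nil big_set0.
Qed.

Lemma setU1D1 (T : finType) (A : {set T}) a b : a != b -> a |: (A :\ b) = (a |: A) :\ b.
Proof. by move=> ab; apply/setP => k; rewrite !inE; case: eqVneq => // ->; rewrite ab. Qed.

Section Coupling.
Variables (N : B -> {set S}) (js : S) (y : S -> R).
Hypothesis y_le1 : forall j, y j <= 1.

Definition coupled (A A' : {set S}) : Prop :=
  exists2 d, A' = (d |: A) :\ js &
    (js \in d |: A) && (score eps w y d <= score eps w y js).

Lemma setD_coupled C A d : js \in d |: A ->
  (C :\ js) :\: ((d |: A) :\ js) = (C :\: A) :\ d.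
Proof.
move=> js_dA; apply/setP => k; rewrite !inE.
case: (eqVneq k js) => [->|_] /=; last by rewrite negb_or andbA.
by move: js_dA; rewrite !inE => /orP[/eqP ->|->]; rewrite ?eqxx ?andbF.
Qed.

Lemma coupled_extend A A' i : coupled A A' ->
  coupled (extend_matched N y A i) (extend_matched (fun i => N i :\ js) y A' i).
Proof.
case=> d -> /andP[js_dA le_djs]; rewrite /extend_matched setD_coupled //.
case: (choose_sellerP y (N i :\: A)) => [j jC j_best|C0]; last first.
  case: (choose_sellerP y ((N i :\: A) :\ d)) => [k|_]; last by exists d; rewrite ?js_dA.
  by rewrite C0 !inE andbF.
have jA : j \notin A by move: jC; rewrite inE => /andP[].
have [ejd|jd] := eqVneq j d.
  subst d; case: (choose_sellerP y ((N i :\: A) :\ j)) => [k kCj _|_]; last first.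
    by exists j; rewrite finset.setUA finset.setUid // js_dA.
  have [kj kC] : k != j /\ k \in N i :\: A by apply/setD1P.
  have kA : k \notin A by move: kC; rewrite inE => /andP[].
  have kjs : k != js by apply: contraTneq js_dA => <-; rewrite in_setU1 negb_or kj.
  exists k; first exact: setU1D1.
  by rewrite in_setU1 js_dA orbT (le_trans (score_le_of_beats _ _ _ (j_best k kC))).
have jjs : j != js by apply: contraTneq js_dA => <-; rewrite in_setU1 negb_or jd.
rewrite (choose_seller_sub _ _ _ _ (subD1set _ d) _ j_best); last by rewrite in_setD1 jd.
exists d; first by rewrite finset.setUCA setU1D1.
by rewrite finset.setUCA in_setU1 js_dA orbT.
Qed.

Lemma coupled_foldl s A A' : coupled A A' ->
  coupled (foldl (extend_matched N y) A s)
          (foldl (extend_matched (fun i => N i :\ js) y) A' s).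
Proof. by elim: s A A' => //= i s IH A A' cAA'; apply/IH/coupled_extend. Qed.

Lemma coupled_matched s : coupled (matched N y s) (matched (fun i => N i :\ js) y s).
Proof. by apply: coupled_foldl; exists js; rewrite ?setU1K ?inE ?eqxx ?lexx. Qed.

Lemma coupled_weight A A' : coupled A A' ->
  - (w js / eps) <= \sum_(j in A) w j - \sum_(j in A') w j <= w js.
Proof.
move=> [d -> /andP[js_dA le_djs]].
have sum_dA : \sum_(j in d |: A) w j = w js + \sum_(j in (d |: A) :\ js) w j.
  exact: big_setD1.
have wjs_eps_ge0 : 0 <= w js / eps by rewrite divr_ge0 // ltW.
have wjs_ge0 := w_ge0 js; have wd_ge0 := w_ge0 d.
have [dA|dA] := boolP (d \in A).
  move: sum_dA; have -> : d |: A = A by apply/finset.setUidPr; rewrite finset.sub1set.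
  by move=> ->; apply/andP; split; lra.
move: sum_dA; rewrite big_setU1 //= => sum_dA.
have le_wd := weight_le_of_score_le y d js (y_le1 d) le_djs.
by apply/andP; split; lra.
Qed.

Lemma eps_ranking_weight_delete_seller s :
  - (w js / eps) <= match_weight w (eps_ranking N s rank eps w y)
                    - match_weight w (eps_ranking (fun i => N i :\ js) s rank eps w y)
                 <= w js.
Proof. by rewrite !eps_ranking_weight; apply/coupled_weight/coupled_matched. Qed.

End Coupling.
End EpsRankingStability.

Theorem lemma7 (R : realType) (S B : finType)
  (N : B -> {set S}) (arr : seq B) (rank : S -> nat) (w : S -> R) (eps : R)
  (x : S -> R) (jstar : S) (theta : R) :
  0 < eps ->
  (forall j, 0 <= w j) ->
  uniq arr -> (forall i : B, i \in arr) ->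
  injective rank ->
  (forall j, 0 <= x j <= 1) ->
  0 <= theta <= 1 ->
  let x' := fun j => if j == jstar then theta else x j in
  let f := fun y : S -> R => match_weight w (eps_ranking N arr rank eps w y) in
  `|f x - f x'| <= (1 + 2 / eps) * w jstar.
Proof.
move=> eps_gt0 w_ge0 _ _ rank_inj x01 theta01; cbv zeta beta.
set x' := fun j => _.
pose f y := match_weight w (eps_ranking N arr rank eps w y).
rewrite -/(f x) -/(f x').
pose N' i := N i :\ jstar.
have x'_eq_x : eps_ranking N' arr rank eps w x' = eps_ranking N' arr rank eps w x.
  by apply: eq_eps_ranking => i j; rewrite !inE /x' => /andP[/negbTE ->].
have x_le1 j : x j <= 1 by case/andP: (x01 j).
have x'_le1 j : x' j <= 1 by rewrite /x'; case: eqP => _; [case/andP: theta01 | exact: x_le1].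
have := eps_ranking_weight_delete_seller rank_inj eps_gt0 w_ge0 N jstar x x_le1 arr.
have := eps_ranking_weight_delete_seller rank_inj eps_gt0 w_ge0 N jstar x' x'_le1 arr.
rewrite -/N' x'_eq_x -/(f x) -/(f x') => /andP[lo_x' hi_x'] /andP[lo_x hi_x].
have wjs_eps_ge0 : 0 <= w jstar / eps by rewrite divr_ge0 ?w_ge0 ?ltW.
have -> : (1 + 2 / eps) * w jstar = w jstar + 2 * (w jstar / eps) by ring.
by rewrite ler_norml; apply/andP; split; lra.
Qed.
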